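(* For the ARQ protocol without feedback described in the context, the myopic policy $a_{s,t}=\mathbf{1}\{i_t=0,\ b_t\ge E_{\rm s}+E_{\rm d}\}$ (sample whenever the current packet has not yet been decoded correctly and the battery holds enough energy for both sampling and decoding) maximizes the throughput $\mathcal{T}(\Psi)=\lim_{T\to\infty}\frac1T\mathbb{E}[\sum_{t=1}^T\mathbf{1}_{S_t}]$ over all admissible policies.
   Context: System model. Time is slotted, $t=1,2,\dots$. The channel power gains $|h_t|^2$ are i.i.d. across slots with CDF $F_H$. A transmitter sends packets at fixed rate $R$ and power $p_{\rm tx}$; let $|h_{\rm th}|^2=(2^R-1)/p_{\rm tx}$ and $p_c=1-F_H(|h_{\rm th}|^2)$. Each packet may be transmitted at most $K>1$ times; $k_t\in\{0,\dots,K-1\}$ is the transmission index. The receiver harvests energy $E_{H,t}$ at the start of slot $t$, with $E_{H,t}$ i.i.d. taking values in a finite set of nonnegative integer multiples of an energy quantum $E$. Its battery level evolves as $b_{t+1}=\min\{b_t-E_{c,t}+E_{H,t+1},B_{\max}\}$, $b_1=E_{H,1}$, where $E_{c,t}$ is the energy consumed in slot $t$ and $B_{\max}<\infty$ is a multiple of $E$. Sampling costs $E_{\rm s}$ and decoding costs $E_{\rm d}$ (positive multiples of $E$). In slot $t$ the receiver chooses $a_{s,t}\in\{0,1\}$. If $a_{s,t}=1$ it consumes $E_{\rm s}$, and if $|h_t|^2\ge|h_{\rm th}|^2$ (probability $p_c$, independent of the past) it decodes the packet correctly, consuming an additional $E_{\rm d}$; otherwise nothing further is consumed. The reception state $i_t\in\{0,1\}$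 equals $1$ iff the current packet has already been decoded correctly; $S_t$ denotes the event that a packet is decoded correctly in slot $t$. System state: $\mathbf{s}_t=(b_t,k_t,i_t)$. ARQ without feedback: no acknowledgement is sent; the transmitter starts a new packet every $K$ slots ($k_{t+1}=(k_t+1)\bmod K$, and $i_{t+1}=0$ when $k_{t+1}=0$). Admissible actions: $a_{s,t}=1$ is allowed only if $i_t=0$ and $b_t\ge E_{\rm s}+E_{\rm d}$; otherwise $a_{s,t}=0$. Policies choose actions based on the system state (the limit defining throughput is assumed to exist). *)

(* classical reals. Energies are measured in units of the quantum E. *)
From Stdlib Require Import Reals Lra Lia Arith List Bool.
Import ListNotations.
Open Scope R_scope.

(* System state s_t = (b_t, k_t, i_t): battery (in quanta), transmission index, reception state. *)
Definition state : Type := (nat * nat * bool)%type.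

Definition policy : Type := nat -> state -> bool.

Definition admissible (Es Ed : nat) (psi : policy) : Prop :=
  forall t b k i, psi t (b, k, i) = true -> i = false /\ (Es + Ed <= b)%nat.

Definition myopic (Es Ed : nat) : policy :=
  fun _ s => match s with (b, _, i) => andb (negb i) (Nat.leb (Es + Ed) b) end.

Definition harvest_dist := list (nat * R).

Definition valid_dist (H : harvest_dist) : Prop :=
  Forall (fun ep => 0 <= snd ep) H /\ fold_right (fun ep acc => snd ep + acc) 0 H = 1.

Definition expect_h (H : harvest_dist) (g : nat -> R) : R :=
  fold_right (fun ep acc => snd ep * g (fst ep) + acc) 0 H.

(* W n t s = expected number of correct decodings in slots t, ..., t+n-1 under policy psi,
   starting from state s at the beginning of slot t (after harvesting E_{H,t}). *)
Fixpoint W (K Es Ed Bmax : nat) (pc : R) (H : harvest_dist) (psi : policy)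
    (n t : nat) (s : state) {struct n} : R :=
  match n with
  | O => 0
  | S n' =>
    match s with (b, k, i) =>
      let k' := Nat.modulo (S k) K in
      let next (bc : nat) (ic : bool) : R :=
        expect_h H (fun e =>
          W K Es Ed Bmax pc H psi n' (S t)
            (Nat.min (bc + e) Bmax, k', if Nat.eqb k' 0 then false else ic)) in
      if psi t s
      then pc * (1 + next (b - Es - Ed)%nat true) + (1 - pc) * next (b - Es)%nat i
      else next b i
    end
  end.

(* E[ sum_{t=1}^T 1_{S_t} ], with b_1 = E_{H,1} (capped at B_max), k_1 = 0, i_1 = 0. *)
Definition expected_successes (K Es Ed Bmax : nat) (pc : R) (H : harvest_dist)
    (psi : policy) (T : nat) : R :=
  expect_h H (fun e => W K Es Ed Bmax pc H psi T 1 (Nat.min e Bmax, 0%nat, false)).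

Definition avg_throughput (K Es Ed Bmax : nat) (pc : R) (H : harvest_dist)
    (psi : policy) (n : nat) : R :=
  expected_successes K Es Ed Bmax pc H psi (S n) / INR (S n).

(* Success probability p_c = 1 - F_H(|h_th|^2), |h_th|^2 = (2^R - 1)/p_tx. *)
Definition success_prob (F_H : R -> R) (Rate ptx : R) : R :=
  1 - F_H ((Rpower 2 Rate - 1) / ptx).

(* Proof idea: a finite-horizon interchange argument.  Let V_n be the expected
   number of successes of the myopic policy over the next n slots.  By induction
   on n, V_n is nondecreasing in the battery level, an already decoded packet is
   worth no more than an undecoded one, and (when sampling is affordable) V_n at
   an undecoded state is bounded by the value of sampling immediately.  Hence
   idling at an undecoded state never beats the myopic choice, and a second
   induction shows that every admissible policy collects, over every horizon, at
   most as many expected successes as the myopic one.  The throughputs are the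
   limits of the horizon averages, so the inequality passes to the limit. *)
From Stdlib Require Import Reals List Lra Lia.
Open Scope R_scope.

Lemma expect_h_le (H : harvest_dist) (f g : nat -> R) :
  Forall (fun ep => 0 <= snd ep) H -> (forall e, f e <= g e) ->
  expect_h H f <= expect_h H g.
Proof.
  intros Hnn Hfg; induction Hnn as [|[e p] H Hp _ IH]; simpl in *; [lra|].
  pose proof (Rmult_le_compat_l p _ _ Hp (Hfg e)); lra.
Qed.

Lemma expect_h_affine (H : harvest_dist) (a c : R) (f g : nat -> R) :
  valid_dist H ->
  expect_h H (fun e => a * (1 + f e) + c * g e) =
  a * (1 + expect_h H f) + c * expect_h H g.
Proof.
  intros [_ Hsum].
  enough (E : expect_h H (fun e => a * (1 + f e) + c * g e) =
              a * (fold_right (fun ep acc => snd ep + acc) 0 H + expect_h H f)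
              + c * expect_h H g) by (rewrite E, Hsum; ring).
  clear Hsum; induction H as [|[e p] H IH]; simpl in *; [ring|].
  rewrite IH; ring.
Qed.

Lemma expect_h_zero (H : harvest_dist) (f : nat -> R) :
  (forall e, f e = 0) -> expect_h H f = 0.
Proof. intros Hf; induction H as [|[e p] H IH]; simpl; [|rewrite Hf, IH]; ring. Qed.

Section MyopicOptimality.

Variables (K Es Ed Bmax : nat) (pc : R) (H : harvest_dist).
Hypothesis HH : valid_dist H.
Hypothesis Hpc : 0 <= pc <= 1.

Local Notation W := (W K Es Ed Bmax pc H).
Local Notation V := (W (myopic Es Ed)).

(* Expected value of the remaining n slots after slot t, when slot t leaves battery b
   and reception state i behind. *)
Definition cont (psi : policy) (n t b k : nat) (i : bool) : R :=
  let k' := Nat.modulo (S k) K in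
  expect_h H (fun e => W psi n (S t)
    (Nat.min (b + e) Bmax, k', if Nat.eqb k' 0 then false else i)).

Lemma W_succ psi n t b k i :
  W psi (S n) t (b, k, i) =
  if psi t (b, k, i)
  then pc * (1 + cont psi n t (b - Es - Ed) k true) + (1 - pc) * cont psi n t (b - Es) k i
  else cont psi n t b k i.
Proof. reflexivity. Qed.

Lemma V_succ_decoded n t b k :
  V (S n) t (b, k, true) = cont (myopic Es Ed) n t b k true.
Proof. reflexivity. Qed.

Lemma V_succ_ready n t b k : (Es + Ed <= b)%nat ->
  V (S n) t (b, k, false) =
  pc * (1 + cont (myopic Es Ed) n t (b - Es - Ed) k true)
  + (1 - pc) * cont (myopic Es Ed) n t (b - Es) k false.
Proof.
  intros Hb; rewrite W_succ; simpl.
  now replace (Nat.leb (Es + Ed) b) with true by (symmetry; apply Nat.leb_le, Hb).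
Qed.

Lemma V_succ_low n t b k : (b < Es + Ed)%nat ->
  V (S n) t (b, k, false) = cont (myopic Es Ed) n t b k false.
Proof.
  intros Hb; rewrite W_succ; simpl.
  now replace (Nat.leb (Es + Ed) b) with false by (symmetry; apply Nat.leb_gt, Hb).
Qed.

Lemma cont_le psi psi' n t b k i :
  (forall s, W psi n (S t) s <= W psi' n (S t) s) ->
  cont psi n t b k i <= cont psi' n t b k i.
Proof. intros Hle; apply expect_h_le; [apply HH | intros; apply Hle]. Qed.

Lemma V_small_capacity n : (Bmax < Es + Ed)%nat ->
  forall t b k i, (b <= Bmax)%nat -> V n t (b, k, i) = 0.
Proof.
  intros HB; induction n as [|n IH]; intros t b k i Hb; [reflexivity|].
  assert (Hidle : V (S n) t (b, k, i) = cont (myopic Es Ed) n t b k i).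
  { destruct i; [apply V_succ_decoded | apply V_succ_low; lia]. }
  rewrite Hidle; apply expect_h_zero; intros e; apply IH; lia.
Qed.

Record myopic_shape (n : nat) : Prop := {
  V_mono_battery : forall t b b' k i, (b <= b')%nat -> V n t (b, k, i) <= V n t (b', k, i);
  V_decoded_le : forall t b k, V n t (b, k, true) <= V n t (b, k, false);
  V_le_sample : forall t b k, (Es + Ed <= b)%nat ->
    V n t (b, k, false) <=
    pc * (1 + V n t (b - Es - Ed, k, true)%nat) + (1 - pc) * V n t (b - Es, k, false)%nat
}.

Section Step.

Variable n : nat.
Hypothesis Hshape : myopic_shape n.

Lemma cont_mono_battery t b b' k i : (b <= b')%nat ->
  cont (myopic Es Ed) n t b k i <= cont (myopic Es Ed) n t b' k i.
Proof.
  intros Hle; apply expect_h_le; [apply HH|]; intros e.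
  apply (V_mono_battery _ Hshape); lia.
Qed.

Lemma cont_decoded_le t b k :
  cont (myopic Es Ed) n t b k true <= cont (myopic Es Ed) n t b k false.
Proof.
  apply expect_h_le; [apply HH|]; intros e.
  destruct (Nat.eqb _ 0); [lra | apply (V_decoded_le _ Hshape)].
Qed.

Lemma cont_le_sample t b k : (Es + Ed <= b)%nat ->
  cont (myopic Es Ed) n t b k false <=
  pc * (1 + cont (myopic Es Ed) n t (b - Es - Ed) k true)
  + (1 - pc) * cont (myopic Es Ed) n t (b - Es) k false.
Proof.
  intros Hb; unfold cont; set (k' := Nat.modulo (S k) K).
  replace (if Nat.eqb k' 0 then false else false) with false by now destruct (Nat.eqb k' 0).
  destruct (Nat.lt_ge_cases Bmax (Es + Ed)) as [HB|HB].
  { rewrite !expect_h_zero by (intros; apply V_small_capacity; lia); lra. }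
  rewrite <- expect_h_affine by exact HH.
  apply expect_h_le; [apply HH|]; intros e.
  set (x := Nat.min (b + e) Bmax).
  eapply Rle_trans; [apply (V_le_sample _ Hshape); unfold x; lia|].
  (* The battery left after acting on the capped level x is at most the capped
     level after acting first, and a reset of the packet only helps. *)
  assert (Hsucc : V n (S t) (x - Es - Ed, k', true)%nat <=
                  V n (S t) (Nat.min (b - Es - Ed + e) Bmax, k',
                             if Nat.eqb k' 0 then false else true)).
  { destruct (Nat.eqb k' 0).
    - eapply Rle_trans; [apply (V_decoded_le _ Hshape)|].
      apply (V_mono_battery _ Hshape); unfold x; lia.
    - apply (V_mono_battery _ Hshape); unfold x; lia. }
  assert (Hfail : V n (S t) (x - Es, k', false)%nat <=
                  V n (S t) (Nat.min (b - Es + e) Bmax, k', false)).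
  { apply (V_mono_battery _ Hshape); unfold x; lia. }
  apply Rplus_le_compat; apply Rmult_le_compat_l; lra.
Qed.

Lemma cont_le_V t b k :
  cont (myopic Es Ed) n t b k false <= V (S n) t (b, k, false).
Proof.
  destruct (Nat.lt_ge_cases b (Es + Ed)) as [Hb|Hb].
  - rewrite V_succ_low by exact Hb; lra.
  - rewrite V_succ_ready by exact Hb; apply cont_le_sample, Hb.
Qed.

Lemma myopic_shape_succ : myopic_shape (S n).
Proof.
  split.
  - intros t b b' k [|] Hle.
    + rewrite !V_succ_decoded; apply cont_mono_battery, Hle.
    + destruct (Nat.lt_ge_cases b (Es + Ed)) as [Hb|Hb].
      * rewrite V_succ_low by exact Hb.
        eapply Rle_trans; [apply cont_mono_battery, Hle | apply cont_le_V].
      * rewrite !V_succ_ready by lia.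
        pose proof (cont_mono_battery t (b - Es - Ed) (b' - Es - Ed) k true ltac:(lia)).
        pose proof (cont_mono_battery t (b - Es) (b' - Es) k false ltac:(lia)).
        apply Rplus_le_compat; apply Rmult_le_compat_l; lra.
  - intros t b k; rewrite V_succ_decoded.
    eapply Rle_trans; [apply cont_decoded_le | apply cont_le_V].
  - intros t b k Hb; rewrite V_succ_ready, V_succ_decoded by exact Hb.
    pose proof (cont_le_V t (b - Es) k).
    apply Rplus_le_compat_l, Rmult_le_compat_l; lra.
Qed.

End Step.

Lemma myopic_shape_all n : myopic_shape n.
Proof.
  induction n as [|n IH]; [|now apply myopic_shape_succ].
  split; simpl; intros; lra.
Qed.

Lemma W_le_myopic psi : admissible Es Ed psi ->
  forall n t s, W psi n t s <= V n t s.
Proof.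
  intros Hpsi; induction n as [|n IH]; intros t [[b k] i]; [simpl; lra|].
  rewrite W_succ.
  destruct (psi t (b, k, i)) eqn:Ep.
  - destruct (Hpsi _ _ _ _ Ep) as [-> Hb].
    rewrite V_succ_ready by exact Hb.
    pose proof (cont_le psi (myopic Es Ed) n t (b - Es - Ed) k true (IH (S t))).
    pose proof (cont_le psi (myopic Es Ed) n t (b - Es) k false (IH (S t))).
    apply Rplus_le_compat; apply Rmult_le_compat_l; lra.
  - eapply Rle_trans; [apply cont_le, IH|].
    destruct i.
    + rewrite V_succ_decoded; lra.
    + apply cont_le_V, myopic_shape_all.
Qed.

End MyopicOptimality.

Theorem proposition1
  (F_H : R -> R) (Rate ptx : R) (K Es Ed Bmax : nat) (H : harvest_dist)
  (HF_mono : forall x y, x <= y -> F_H x <= F_H y)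
  (HF_range : forall x, 0 <= F_H x <= 1)
  (HRate : 0 < Rate) (Hptx : 0 < ptx)
  (HK : (1 < K)%nat) (HEs : (1 <= Es)%nat) (HEd : (1 <= Ed)%nat)
  (HH : valid_dist H)
  (psi : policy) (Hpsi : admissible Es Ed psi)
  (Lpsi Lmy : R)
  (Hlim_psi : Un_cv (avg_throughput K Es Ed Bmax (success_prob F_H Rate ptx) H psi) Lpsi)
  (Hlim_my : Un_cv (avg_throughput K Es Ed Bmax (success_prob F_H Rate ptx) H (myopic Es Ed)) Lmy) :
  Lpsi <= Lmy.
Proof.
  assert (Hpc : 0 <= success_prob F_H Rate ptx <= 1).
  { unfold success_prob; pose proof (HF_range ((Rpower 2 Rate - 1) / ptx)); lra. }
  refine (Rle_cv_lim _ Hlim_psi Hlim_my); intros n.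
  unfold avg_throughput, Rdiv; apply Rmult_le_compat_r.
  - left; apply Rinv_0_lt_compat, lt_0_INR; lia.
  - apply expect_h_le; [apply HH|]; intros e.
    apply W_le_myopic; assumption.
Qed.
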